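(* Let $\mathcal{P}$ be a finite set of passwords, let $R_1,\dots,R_m\subseteq\mathcal{P}$ be positive rules, and let $\ell$ be a ranking (total order) of $\mathcal{P}$. For $S\subseteq[m]$ let $\mathcal{A}_S=\bigcup_{i\in S}R_i$, and let $\ell(\mathcal{A}_S)$ denote the $\ell$-most-preferred password in $\mathcal{A}_S$ (if $\mathcal{A}_S\neq\emptyset$). Consider the procedure Reduce: set $S_0=[m]$, $i=0$, and $\hat\ell$ the empty list; while $S_i\neq\emptyset$, let $w=\ell(\mathcal{A}_{S_i})$, append $w$ to $\hat\ell$, set $S_{i+1}=S_i\setminus\{j : w\in R_j\}$ and increase $i$ by one; finally output $\hat\ell$. Then Reduce makes at most $m$ queries of the form $\ell(\mathcal{A}_{S})$ and at most $m^2$ membership queries (''is $w\in R_j$?''), and outputs a list $\hat\ell$ of at most $m$ passwords such that for every $S\subseteq[m]$ (with $\mathcal{A}_S\neq\emptyset$) the first password of $\hat\ell$ lying in $\mathcal{A}_S$ equals $\ell(\mathcal{A}_S)$.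
   Context: A ranking of $\mathcal{P}$ represents a user's preferences: the user prefers earlier passwords. Under a password policy $\mathcal{A}\subseteq\mathcal{P}$ a user picks the most preferred password in $\mathcal{A}$. In the positive rules setting, the policy determined by a set $S\subseteq[m]$ of active rules is $\mathcal{A}_S=\bigcup_{i\in S}R_i$. *)

From mathcomp Require Import all_boot.
Set Implicit Arguments. Unset Strict Implicit. Unset Printing Implicit Defensive.

(* A ranking of the finite password set P is a duplicate-free list l
   containing every password; earlier = more preferred. *)
Definition is_ranking (P : finType) (l : seq P) : Prop :=
  uniq l /\ forall x : P, x \in l.

Definition best (P : finType) (l : seq P) (A : {set P}) : option P :=
  ohead [seq x <- l | x \in A].

Definition policy (P : finType) (m : nat) (R : 'I_m -> {set P})
  (S : {set 'I_m}) : {set P} := \bigcup_(i in S) R i.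

(* Returns
   (output list, number of l(A_S) queries, number of membership queries).
   Each iteration issues one query l(A_{S_i}) and, to compute
   S_{i+1} = S_i \ {j : w in R_j}, one membership query "w in R_j?" for each
   j in S_i.  If A_{S_i} is empty (possible only if some rules are empty)
   the query returns nothing and the procedure stops. *)
Fixpoint reduce_loop (P : finType) (m : nat) (R : 'I_m -> {set P})
  (l : seq P) (fuel : nat) (S : {set 'I_m}) : seq P * nat * nat :=
  match fuel with
  | 0 => ([::], 0, 0)
  | fuel'.+1 =>
    if S == set0 then ([::], 0, 0) else
    match best l (policy R S) with
    | None => ([::], 1, 0)
    | Some w =>
      let S' := [set j in S | w \notin R j] in
      let r := reduce_loop R l fuel' S' in
      (w :: r.1.1, r.1.2.+1, r.2 + #|S|)
    end
  end.

(* Reduce: start from S_0 = [m]; fuel m.+1 is more than enough since each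
   iteration removes at least one index. *)
Definition Reduce (P : finType) (m : nat) (R : 'I_m -> {set P}) (l : seq P)
  : seq P * nat * nat := reduce_loop R l m.+1 [set: 'I_m].

From mathcomp Require Import all_boot.
From mathcomp Require Import zify.
Set Implicit Arguments. Unset Strict Implicit.

(* Let w = l(A_S).  A subpolicy A_T (T a subset of S) either contains w, and
   then l(A_T) = w, or avoids w, and then T only uses rules surviving the
   step, i.e. T is a subset of S' = {j in S | w notin R_j}.  Hence prepending
   w to a list that is correct for all subsets of S' gives a list correct
   for all subsets of S.  Each step removes at least the rules containing w,
   so there are at most |S| steps, each with |S| membership queries. *)

Lemma best_cons (P : finType) (x : P) (l : seq P) (A : {set P}) :
  best (x :: l) A = if x \in A then Some x else best l A.
Proof. by rewrite /best /=; case: (x \in A). Qed.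

Lemma best_mem (P : finType) (l : seq P) (A : {set P}) (w : P) :
  best l A = Some w -> w \in A.
Proof.
elim: l => [|x l IH] //; rewrite best_cons.
by case: ifP => [xA [<-] | _].
Qed.

Lemma best_subset (P : finType) (l : seq P) (A B : {set P}) (w : P) :
  B \subset A -> best l A = Some w -> w \in B -> best l B = Some w.
Proof.
move=> sBA; elim: l => [|x l IH] //; rewrite !best_cons.
case: ifP => [_ [<-] -> // | xAF bestw wB].
by rewrite (contraFF (subsetP sBA x) xAF); apply: IH.
Qed.

Lemma best_neq_None (P : finType) (l : seq P) (A : {set P}) (x : P) :
  x \in l -> x \in A -> best l A != None.
Proof.
elim: l => [|y l IH] //; rewrite best_cons inE.
by case: ifP => // yAF /predU1P [-> xA | /IH]; [rewrite xA in yAF|].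
Qed.

Lemma policy_subset (P : finType) (m : nat) (R : 'I_m -> {set P})
  (T S : {set 'I_m}) :
  T \subset S -> policy R T \subset policy R S.
Proof.
move=> sTS; apply/bigcupsP => j jT.
exact: bigcup_sup (subsetP sTS j jT).
Qed.

Section ReduceLoop.

Variables (P : finType) (m : nat) (R : 'I_m -> {set P}) (l : seq P).

Definition reduce_step (w : P) (S : {set 'I_m}) : {set 'I_m} :=
  [set j in S | w \notin R j].

Lemma reduce_step_subset (w : P) (S : {set 'I_m}) : reduce_step w S \subset S.
Proof. by apply/subsetP => j; rewrite inE => /andP []. Qed.

Lemma card_reduce_step (w : P) (S : {set 'I_m}) :
  w \in policy R S -> #|reduce_step w S| < #|S|.
Proof.
case/bigcupP => j jS wRj; apply: proper_card.
rewrite properE reduce_step_subset /=.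
by apply/subsetPn; exists j; rewrite // inE jS wRj.
Qed.

Lemma subset_reduce_step (w : P) (S T : {set 'I_m}) :
  T \subset S -> w \notin policy R T -> T \subset reduce_step w S.
Proof.
move=> sTS wT; apply/subsetP => j jT; rewrite inE (subsetP sTS j jT) /=.
by apply: contra wT => wRj; apply/bigcupP; exists j.
Qed.

Lemma reduce_loop_unfold (fuel : nat) (S : {set 'I_m}) (w : P) :
  S != set0 -> best l (policy R S) = Some w ->
  reduce_loop R l fuel.+1 S =
  let r := reduce_loop R l fuel (reduce_step w S) in
  (w :: r.1.1, r.1.2.+1, r.2 + #|S|).
Proof. by move=> /negbTE /= -> ->. Qed.

Lemma size_reduce_loop (fuel : nat) (S : {set 'I_m}) :
  size (reduce_loop R l fuel S).1.1 <= (reduce_loop R l fuel S).1.2.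
Proof.
elim: fuel S => [|n IH] S //=.
by case: ifP => // _; case: best => //= w; apply: IH.
Qed.

Lemma reduce_loop_queries (fuel : nat) (S : {set 'I_m}) :
  #|S| < fuel -> (reduce_loop R l fuel S).1.2 <= #|S|.
Proof.
elim: fuel S => [|n IH] S // ltSn.
have [-> | S0] := eqVneq S set0; first by rewrite /= eqxx.
case Ebest: (best l (policy R S)) => [w|]; last first.
  by rewrite /= (negbTE S0) Ebest card_gt0.
have ltS := card_reduce_step (best_mem Ebest).
by rewrite (reduce_loop_unfold _ S0 Ebest) /= (leq_trans _ ltS) // ltnS IH // (leq_trans ltS).
Qed.

Lemma reduce_loop_memberships (fuel : nat) (S : {set 'I_m}) :
  #|S| < fuel -> (reduce_loop R l fuel S).2 <= #|S| ^ 2.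
Proof.
elim: fuel S => [|n IH] S // ltSn.
have [-> | S0] := eqVneq S set0; first by rewrite /= eqxx.
case Ebest: (best l (policy R S)) => [w|]; last by rewrite /= (negbTE S0) Ebest.
have ltS := card_reduce_step (best_mem Ebest).
have := IH (reduce_step w S) (leq_trans ltS ltSn).
rewrite (reduce_loop_unfold _ S0 Ebest) /=.
move: ltS; set k := #|reduce_step w S|; set s := #|S|; nia.
Qed.

Hypothesis l_total : forall x : P, x \in l.

Lemma reduce_loop_best (fuel : nat) (S T : {set 'I_m}) :
  #|S| < fuel -> T \subset S -> policy R T != set0 ->
  best (reduce_loop R l fuel S).1.1 (policy R T) = best l (policy R T).
Proof.
elim: fuel S T => [|n IH] S T // ltSn sTS /set0Pn [x xT].
have Sn0 : S != set0.
  by apply/set0Pn; case/bigcupP: xT => j /(subsetP sTS) jS _; exists j.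
case Ebest: (best l (policy R S)) => [w|]; last first.
  have xS := subsetP (policy_subset R sTS) x xT.
  by move/eqP: Ebest; rewrite (negbTE (best_neq_None (l_total x) xS)).
rewrite (reduce_loop_unfold _ Sn0 Ebest) /= best_cons.
case: ifPn => [wT | wT].
  by rewrite (best_subset (policy_subset R sTS) Ebest wT).
apply: IH; first exact: leq_trans (card_reduce_step (best_mem Ebest)) ltSn.
  exact: subset_reduce_step.
by apply/set0Pn; exists x.
Qed.

End ReduceLoop.

Theorem claim3p1 (P : finType) (m : nat) (R : 'I_m -> {set P}) (l : seq P)
  (Hl : is_ranking l) :
  let out := Reduce R l in
  out.1.2 <= m /\ out.2 <= m ^ 2 /\ size out.1.1 <= m /\
  (forall S : {set 'I_m}, policy R S != set0 ->
     best out.1.1 (policy R S) = best l (policy R S)).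
Proof.
case: Hl => _ l_total /=; rewrite /Reduce.
have cardT : #|[set: 'I_m]| = m by rewrite cardsT card_ord.
have fuel_ok : #|[set: 'I_m]| < m.+1 by rewrite cardT.
have queries := reduce_loop_queries R l fuel_ok.
have memberships := reduce_loop_memberships R l fuel_ok.
rewrite cardT in queries memberships.
split=> //; split=> //; split; first exact: leq_trans (size_reduce_loop R l _ _) queries.
by move=> S; apply: reduce_loop_best => //; apply: subsetT.
Qed.
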